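(* Let $p_1,\ldots,p_m\in[0,1]$, $\alpha\in[0,1]$, $h=h_\alpha$ as in the context, and let $S\subseteq\{1,\ldots,m\}$ be nonempty. Define \[ z_\alpha=\begin{cases}0,&\text{if } h=m,\\ \min\{m-h\le i\le m: h\,p_{(i)}\le (i-m+h+1)\alpha\},&\text{otherwise.}\end{cases} \] Then the maximum of $1-u+|\{i\in S: hp_i\le u\alpha\}|$ over $1\le u\le |S|$ is attained for some $1\le u\le z_\alpha-m+h+1$.
   Context: Setting: $m$ hypotheses with $p$-values $p_1,\ldots,p_m\in[0,1]$; $p_{(1)}\le\cdots\le p_{(m)}$ are the ordered $p$-values (with the convention $p_{(0)}$ not used). For $I\subseteq\{1,\ldots,m\}$, $p_{(i:I)}$ denotes the $i$-th smallest of $\{p_j:j\in I\}$. The Simes local test rejects $I$ ($I\in\mathcal{U}_\alpha$) iff there is $1\le i\le |I|$ with $|I|\,p_{(i:I)}\le i\alpha$. Let $r_1,\ldots,r_m$ be a permutation with $p_{r_i}=p_{(i)}$, $K_i=\{r_{m-i+1},\ldots,r_m\}$, and $h_\alpha=\max\{0\le i\le m: K_i\notin\mathcal{U}_\alpha\}$. *)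

From HB Require Import structures.
From mathcomp Require Import all_boot all_order all_algebra all_fingroup.
Set Implicit Arguments. Unset Strict Implicit. Unset Printing Implicit Defensive.
Import Order.TTheory GRing.Theory Num.Theory.
Local Open Scope ring_scope.

Section Simes.
Variables (R : realFieldType) (m : nat) (p : 'I_m -> R) (alpha : R).

Definition pI (I : {set 'I_m}) (i : nat) : R :=
  nth 0 (sort <=%R [seq p j | j <- enum I]) i.-1.

Definition simes_rej (I : {set 'I_m}) : bool :=
  [exists i : 'I_(#|I|.+1), (0 < (i : nat))%N && (#|I|%:R * pI I i <= (i : nat)%:R * alpha)].

Variable r : {perm 'I_m}.
Definition sorting_perm : Prop :=
  forall i j : 'I_m, (i <= j)%N -> p (r i) <= p (r j).

Definition pord (i : nat) : R := nth 0 [seq p (r k) | k <- enum 'I_m] i.-1.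

(* K_i = {r_{m-i+1}, ..., r_m} (1-based), i.e. 0-based k >= m - i. *)
Definition Kset (i : nat) : {set 'I_m} := [set r k | k : 'I_m & (m - i <= k)%N].

Definition halpha : nat := \max_(i < m.+1 | ~~ simes_rej (Kset i)) (i : nat).

(* z_alpha = 0 if h = m, else min{m-h <= i <= m : h p_(i) <= (i-m+h+1) alpha}.
   (The set is provably nonempty when h < m; the default m of the big min
   is never reached.) *)
Definition zalpha : nat :=
  let h := halpha in
  if h == m then 0%N
  else \big[minn/m]_(m - h <= i < m.+1 |
          h%:R * pord i <= (i + h + 1 - m)%:R * alpha) i.

Definition objS (S : {set 'I_m}) (u : nat) : int :=
  (1%:Z - u%:Z + (#|[set i in S | halpha%:R * p i <= u%:R * alpha]|)%:Z)%R.

End Simes.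

From HB Require Import structures.
From mathcomp Require Import all_boot all_order all_algebra all_fingroup.
From mathcomp Require Import zify.
Import Order.TTheory GRing.Theory Num.Theory.
Local Open Scope ring_scope.

(* Write B := z - m + h + 1.  Raising the level u above B only adds indices i
   with B alpha < h p_i <= u alpha.  Such an i has sorted rank > z, since
   h p_(k) <= B alpha for every rank k <= z (by the choice of z); and it has
   rank < m - h + u, since K_h is not Simes-rejected, i.e.
   t alpha < h p_(m-h+t) for 1 <= t <= h.  So at most u - B indices are added,
   the objective never increases beyond u = B, and its maximum over
   1 <= u <= min(B, |S|) is a maximum over 1 <= u <= |S|. *)

Lemma bigmin_attained {d} {T : orderType d} {I : Type} (s : seq I) (P : pred I)
    (F : I -> T) (x : T) :
  has P s -> (forall i, P i -> (F i <= x)%O) ->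
  exists2 i, P i & \big[Order.min/x]_(i <- s | P i) F i = F i.
Proof.
move=> + leFx; elim: s => //= j s IH; rewrite big_cons.
have [/IH[i Pi ->] _|hasN] := boolP (has P s).
  case: ifP => Pj; last by exists i.
  have [le|/ltW le] := leP (F j) (F i).
    by exists j; rewrite ?min_l.
  by exists i; rewrite ?min_r.
rewrite orbF => Pj; rewrite Pj big_hasC //.
by exists j; rewrite ?min_l ?leFx.
Qed.

Lemma exists_argmax_nat {d} {T : orderType d} (f : nat -> T) a b : (a <= b)%N ->
  exists2 u, (a <= u <= b)%N & forall v, (a <= v <= b)%N -> (f v <= f u)%O.
Proof.
move=> ab.
have [i ai imax] := @arg_maxP _ _ _ ord_max (fun i : 'I_b.+1 => a <= i)%N
  (fun i => f i) ab.
exists i; first by rewrite ai -ltnS ltn_ord.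
by move=> v /andP[av vb]; exact: (imax (Ordinal (vb : (v < b.+1)%N))).
Qed.

Lemma card_ord_window n (A : {pred 'I_n}) a b :
  {in A, forall k : 'I_n, a <= k < b}%N -> (#|A| <= b - a)%N.
Proof.
move=> Aab; rewrite cardE -(size_map val) -(size_iota a (b - a)).
apply: uniq_leq_size; first by rewrite (map_inj_uniq val_inj) enum_uniq.
move=> _ /mapP[k kA ->]; rewrite mem_enum in kA.
have /andP[ak kb] := Aab k kA.
by rewrite mem_iota ak subnKC // ltnW // (leq_ltn_trans ak kb).
Qed.

Lemma mem_drop_enum_ord n a (k : 'I_n) :
  (k \in drop a (enum 'I_n)) = (a <= k)%N.
Proof.
rewrite -(mem_map val_inj) map_drop val_enum_ord drop_iota mem_iota add0n.
by have := ltn_ord k; case: (leqP a k) => //=; lia.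
Qed.

Section SimesOrderStatistics.
Local Set Implicit Arguments. Local Unset Strict Implicit.
Variables (R : realFieldType) (m : nat) (p : 'I_m -> R) (alpha : R).
Variable r : {perm 'I_m}.

Local Notation ranked := [seq p (r k) | k <- enum 'I_m].
Local Notation pord := (pord p r).
Local Notation Kset := (Kset r).

Lemma pordE (k : 'I_m) : pord k.+1 = p (r k).
Proof. by rewrite /pord /= (nth_map k) ?size_enum_ord // nth_ord_enum. Qed.

Lemma perm_Kset i : perm_eq (enum (Kset i)) (map r (drop (m - i) (enum 'I_m))).
Proof.
apply: uniq_perm; first exact: enum_uniq.
  by rewrite (map_inj_uniq perm_inj) drop_uniq ?enum_uniq.
move=> x; rewrite mem_enum; apply/imsetP/mapP => -[k].
  by rewrite inE => kK ->; exists k; rewrite ?mem_drop_enum_ord.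
by rewrite mem_drop_enum_ord => kK ->; exists k; rewrite ?inE.
Qed.

Lemma card_Kset i : (i <= m)%N -> #|Kset i| = i.
Proof.
move=> im; rewrite cardE (perm_size (perm_Kset i)) size_map size_drop.
by rewrite size_enum_ord; lia.
Qed.

Hypothesis sorted_r : sorting_perm p r.

Lemma sorted_ranked : sorted <=%R ranked.
Proof.
rewrite sorted_map.
apply: (sub_sorted (e := relpre val leq)) => [k l /sorted_r //|].
by rewrite -sorted_map val_enum_ord iota_sorted.
Qed.

Lemma le_pord i j : (0 < i)%N -> (i <= j <= m)%N -> pord i <= pord j.
Proof.
move=> i0 /andP[ij jm]; rewrite /pord.
have size_ranked : size ranked = m by rewrite size_map size_enum_ord.
apply: (sorted_leq_nth le_trans lexx _ sorted_ranked);
  rewrite ?inE ?size_ranked; lia.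
Qed.

Lemma pI_Kset i j : (0 < j)%N -> pI p (Kset i) j = pord (m - i + j).
Proof.
move=> j0; rewrite /pI /pord (perm_sort_leP _ _ (perm_map p (perm_Kset i))).
rewrite -map_comp map_drop sort_le_id ?nth_drop; first by congr nth; lia.
exact/drop_sorted/sorted_ranked.
Qed.

Lemma simes_rej_KsetP i : (i <= m)%N ->
  reflect (exists2 j, (0 < j <= i)%N & i%:R * pord (m - i + j) <= j%:R * alpha)
          (simes_rej p alpha (Kset i)).
Proof.
move=> im; have cardK := card_Kset im.
apply: (iffP existsP) => [[[j /= jlt] /andP[j0 rej]]|[j /andP[j0 ji] rej]].
  rewrite cardK ltnS in jlt; rewrite cardK (pI_Kset i j0) in rej.
  by exists j; rewrite ?j0.
have jK : (j < #|Kset i|.+1)%N by rewrite cardK ltnS.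
by exists (Ordinal jK); rewrite /= j0 cardK pI_Kset.
Qed.

Local Notation h := (halpha p alpha r).

Lemma halpha_spec : (h <= m)%N && ~~ simes_rej p alpha (Kset h).
Proof.
rewrite /halpha.
apply: (big_ind (fun x => (x <= m)%N && ~~ simes_rej p alpha (Kset x))).
- by rewrite leq0n; apply/negP => /(simes_rej_KsetP (leq0n m)) -[j]; lia.
- by move=> x y hx hy; rewrite /maxn; case: ifP.
- by move=> i ->; rewrite -ltnS ltn_ord.
Qed.

Lemma lt_pord_halpha t :
  (0 < t <= h)%N -> t%:R * alpha < h%:R * pord (m - h + t).
Proof.
case/andP: halpha_spec => hm /(simes_rej_KsetP hm) notrej th.
by rewrite ltNge; apply/negP => le; apply: notrej; exists t.
Qed.

Lemma simes_rej_Kset_halpha_succ : (h < m)%N -> simes_rej p alpha (Kset h.+1).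
Proof.
move=> hm; apply: contraT => notrej.
have : (h.+1 <= h)%N := @leq_bigmax_cond _
  (fun i : 'I_m.+1 => ~~ simes_rej p alpha (Kset i)) val
  (Ordinal (hm : (h.+1 < m.+1)%N)) notrej.
by rewrite ltnn.
Qed.

Local Notation z := (zalpha p alpha r).
Local Notation zbound := (z + h + 1 - m)%N.

Lemma zalpha_bounds : (m - h <= z <= m)%N.
Proof.
rewrite /zalpha /=; case: eqP => [->|_]; first by rewrite subnn.
rewrite big_nat_cond; apply: (big_ind (fun x => m - h <= x <= m)%N).
- by rewrite leq_subr leqnn.
- by move=> x y hx hy; rewrite /minn; case: ifP.
- by move=> i /andP[] /andP[-> /=]; rewrite ltnS.
Qed.

Hypothesis p_ge0 : forall j, 0 <= p j.

Lemma pord_ge0 i : 0 <= pord i.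
Proof.
rewrite /pord; have [lt|ge] := ltnP i.-1 (size ranked).
  by have /mapP[k _ ->] := mem_nth 0 lt.
by rewrite nth_default.
Qed.

Lemma zalpha_attained : (h < m)%N -> h%:R * pord z <= zbound%:R * alpha.
Proof.
move=> hm; pose P j := h%:R * pord j <= (j + h + 1 - m)%:R * alpha.
have zE : z = \big[minn/m]_(j <- index_iota (m - h) m.+1
                     | (j \in index_iota (m - h) m.+1) && P j) j.
  by rewrite /zalpha /= ltn_eqF // -big_seq_cond.
have hasP : has (fun j => (j \in index_iota (m - h) m.+1) && P j)
               (index_iota (m - h) m.+1).
  have /(simes_rej_KsetP hm)[t /andP[t0 th] rej] :=
    simes_rej_Kset_halpha_succ hm.
  apply/hasP; exists (m - h.+1 + t)%N; rewrite mem_index_iota; first by lia.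
  apply/andP; split; first by lia.
  rewrite /P; have -> : (m - h.+1 + t + h + 1 - m = t)%N by lia.
  apply: le_trans rej; rewrite ler_wpM2r ?pord_ge0 // ler_nat; lia.
have [k /andP[_ Pk] ->] :
    exists2 k, (k \in index_iota (m - h) m.+1) && P k & z = k.
  rewrite zE; apply: bigmin_attained hasP _ => k /andP[].
  by rewrite mem_index_iota; lia.
exact: Pk.
Qed.

Lemma pord_le_zalpha i : (0 < i <= z)%N -> h%:R * pord i <= zbound%:R * alpha.
Proof.
case/andP=> i0 iz; have /andP[_ zm] := zalpha_bounds.
have hm : (h < m)%N.
  rewrite ltn_neqAle (andP halpha_spec).1 andbT; apply/eqP => hm.
  by move: iz; rewrite /zalpha /= hm eqxx; case: i i0.
apply: le_trans (zalpha_attained hm).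
by rewrite ler_wpM2l ?ler0n // le_pord // iz.
Qed.

Hypothesis alpha_ge0 : 0 <= alpha.

Lemma rank_window (k : 'I_m) u :
  zbound%:R * alpha < h%:R * p (r k) -> h%:R * p (r k) <= u%:R * alpha ->
  (z <= k < m - h + u - 1)%N.
Proof.
move=> lo hi; have /andP[zlo zm] := zalpha_bounds.
have zk : (z <= k)%N.
  rewrite leqNgt; apply/negP => kz.
  by have := pord_le_zalpha (i := k.+1) kz; rewrite pordE leNgt lo.
have hm := (andP halpha_spec).1.
set t := (k.+1 - (m - h))%N.
have kh : (0 < t <= h)%N by have := ltn_ord k; lia.
have := lt_pord_halpha kh; rewrite (_ : m - h + t = k.+1)%N ?pordE; last by lia.
move=> tlt; have tu : (t < u)%N.
  rewrite ltnNge; apply/negP => ut.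
  by have := lt_le_trans tlt hi; rewrite ltNge ler_wpM2r // ler_nat ut.
rewrite zk /=; lia.
Qed.

Local Notation level S u := [set i in S | h%:R * p i <= u%:R * alpha].

Lemma card_level_le (S : {set 'I_m}) u : (zbound <= u)%N ->
  (#|level S u| <= #|level S zbound| + (u - zbound))%N.
Proof.
move=> Bu.
pose D := [set j | zbound%:R * alpha < h%:R * p j <= u%:R * alpha].
have sub : level S u \subset level S zbound :|: D.
  by apply/subsetP => j; rewrite !inE => /andP[-> ->]; rewrite andbT; case: leP.
apply: leq_trans (subset_leq_card sub) _.
apply: leq_trans (leq_card_setU _ _) _.
rewrite leq_add2l -(card_preimset D (@perm_inj _ r)).
have /andP[zlo _] := zalpha_bounds; have hm := (andP halpha_spec).1.
apply: leq_trans (@card_ord_window _ _ z (m - h + u - 1) _) _; last by lia.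
by move=> k; rewrite !inE => /andP[lo hi]; exact: rank_window lo hi.
Qed.

Lemma objS_le_zbound (S : {set 'I_m}) v :
  (zbound <= v)%N -> objS p alpha r S v <= objS p alpha r S zbound.
Proof. by move=> Bv; have := card_level_le S Bv; rewrite /objS; lia. Qed.

End SimesOrderStatistics.

Theorem lemma3 (R : realFieldType) (m : nat) (p : 'I_m -> R) (alpha : R)
  (r : {perm 'I_m}) (S : {set 'I_m}) :
  (forall j, 0 <= p j <= 1) -> 0 <= alpha <= 1 ->
  sorting_perm p r ->
  S != set0 ->
  exists u : nat,
    [/\ (1 <= u)%N, (u <= #|S|)%N,
        (u <= zalpha p alpha r + halpha p alpha r + 1 - m)%N &
        forall v : nat, (1 <= v)%N -> (v <= #|S|)%N ->
          (objS p alpha r S v <= objS p alpha r S u)%R].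
Proof.
move=> p01 /andP[alpha_ge0 _] sorted_r S0.
have p_ge0 j : 0 <= p j by case/andP: (p01 j).
set B := (zalpha p alpha r + halpha p alpha r + 1 - m)%N.
have B_gt0 : (0 < B)%N by have /andP[zlo _] := zalpha_bounds p alpha r; lia.
have S_gt0 : (0 < #|S|)%N by rewrite card_gt0.
have [|u /andP[u1 uB] umax] :=
  exists_argmax_nat (objS p alpha r S) 1 (minn B #|S|).
  by rewrite leq_min B_gt0.
exists u; split => //; [lia | lia | move=> v v1 vS].
have [vB|Bv] := leqP v B; first by apply: umax; rewrite v1 leq_min vB.
have := objS_le_zbound sorted_r p_ge0 alpha_ge0 S (ltnW Bv).
move/le_trans; apply; apply: umax.
by rewrite B_gt0 leq_min leqnn ltnW // (leq_trans Bv vS).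
Qed.
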